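(* Let $L=\mathbb{Z}\alpha$ with $\langle\alpha,\alpha\rangle=-2k$, $k\in\mathbb{Z}_{>0}$, and let $m\in\mathbb{Z}_{>0}$. In $V_L^+$, consider the elements $f_1=\alpha(-5)F^m$, $f_2=\alpha(-4)\alpha(-1)E^m$, $f_3=\alpha(-3)\alpha(-2)E^m$, $f_4=\alpha(-3)\alpha(-1)^2F^m$, $f_5=\alpha(-2)^2\alpha(-1)F^m$, $f_6=\alpha(-2)\alpha(-1)^3E^m$, $f_7=\alpha(-1)^5F^m$ and $h_1=\alpha(-3)F^m$, $h_2=\alpha(-2)\alpha(-1)E^m$, $h_3=\alpha(-1)^3F^m$. Then the eleven vectors $L(-1)f_i$ ($1\le i\le 7$), $L(-3)h_j$ ($1\le j\le 3$) and $(\alpha(-1)^4\mathbf{1})_{-3}E^m$ form a basis of the weight space $V_L^+(m,-km^2+6)$.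
   Context: Let $L$ be an even lattice with non-degenerate symmetric $\mathbb{Z}$-bilinear form $\langle\cdot,\cdot\rangle$, $\mathfrak{h}=\mathbb{C}\otimes_{\mathbb{Z}}L$, $M(1)$ the Heisenberg vertex algebra (free bosons) generated by $h(-n)$, $h\in\mathfrak{h}$, $n>0$, with $[h(m),h'(n)]=m\langle h,h'\rangle\delta_{m+n,0}$, and $V_L=M(1)\otimes\mathbb{C}[L]$ the lattice vertex algebra (defined with a 2-cocycle on $L$), with conformal vector $\omega=\frac12\sum_i h_i(-1)^2\mathbf{1}$ for an orthonormal basis $\{h_i\}$ of $\mathfrak{h}$, $Y(\omega,z)=\sum_nL(n)z^{-n-2}$. The weight of $\beta_1(-n_1)\cdots\beta_r(-n_r)e^{\beta}$ is $n_1+\cdots+n_r+\langle\beta,\beta\rangle/2$. Let $\theta$ be the automorphism of $V_L$ with $\theta(\beta_1(-n_1)\cdots\beta_r(-n_r)e^{\beta})=(-1)^r\beta_1(-n_1)\cdots\beta_r(-n_r)e^{-\beta}$; $V_L^+$ (resp. $M(1)^\pm$) denotes the $+1$-eigenspace of $\theta$ on $V_L$ (resp. $\pm1$-eigenspaces on $M(1)$). For $u\in V_L$, $Y(u,z)=\sum_n u_nz^{-n-1}$. For $L=\mathbb{Z}\alpha$ and $m\in\mathbb{Z}_{>0}$, set $E^m=e^{m\alpha}+e^{-m\alpha}$, $F^m=e^{m\alpha}-e^{-m\alpha}$, $V_L^+(m)=M(1)^+\otimes E^m\oplus M(1)^-\otimes F^m$, and $V_L^+(m,n)$ the weight-$n$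 subspace of $V_L^+(m)$. An expression like $\alpha(-2)\alpha(-1)E^m$ means $\alpha(-2)\alpha(-1)\mathbf{1}\otimes E^m$. *)

(* Concrete model of the rank-one lattice vertex algebra
   V_L = M(1) (x) C[L], L = Z alpha, <alpha,alpha> = a2, over algC (the
   MathComp model of the complex numbers).

   A basis vector  alpha(-n_1)...alpha(-n_r) (x) e^{b alpha}  is encoded by the
   key (s, b) with s = [:: n_1; ...; n_r] (a multiset of positive integers;
   keys are compared up to permutation, since M(1) is commutative).
   A vector is a finite formal linear combination (a list of coefficient/key
   pairs); its actual value is read off by [coef]. *)
From mathcomp Require Import all_boot all_order all_algebra all_field.
Set Implicit Arguments. Unset Strict Implicit. Unset Printing Implicit Defensive.
Import Order.TTheory GRing.Theory Num.Theory.
Local Open Scope ring_scope.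

Definition key := (seq nat * int)%type.
Definition vec := seq (algC * key).

Definition vscale (c : algC) (v : vec) : vec := [seq (c * t.1, t.2) | t <- v].
Definition vadd (v w : vec) : vec := v ++ w.

Definition coef (v : vec) (x : key) : algC :=
  \sum_(t <- v | perm_eq t.2.1 x.1 && (t.2.2 == x.2)) t.1.

Definition rem_at (i : nat) (s : seq nat) : seq nat := take i s ++ drop i.+1 s.

(* action of the Heisenberg mode alpha(n) on a basis term:
   alpha(-n), n>0: creation; alpha(0) e^{b alpha} = <alpha, b alpha> e^{b alpha};
   alpha(n), n>0: acts as n <alpha,alpha> d/d alpha(-n). *)
Definition heis_basis (a2 : int) (n : int) (t : algC * key) : vec :=
  let: (c, (s, b)) := t in
  if n < 0 then [:: (c, (absz n :: s, b))]
  else if n == 0 then [:: (c * (b * a2)%:~R, (s, b))]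
  else [seq (c * (n * a2)%:~R, (rem_at i s, b))
         | i <- iota 0 (size s) & nth 0%N s i == absz n].

Definition heis (a2 : int) (n : int) (v : vec) : vec :=
  flatten [seq heis_basis a2 n t | t <- v].

(* normally ordered product :alpha(n_1) ... alpha(n_r): *)
Definition nop (a2 : int) (ns : seq int) (v : vec) : vec :=
  foldr (heis a2) v ([seq n <- ns | n < 0] ++ [seq n <- ns | 0 <= n]).

Definition rangeZ (B : nat) : seq int := [seq (i%:Z - B%:Z) | i <- iota 0 (B.*2.+1)].
Fixpoint tuplesZ (r B : nat) : seq (seq int) :=
  match r with
  | 0 => [:: [::]]
  | r'.+1 => [seq x :: t | x <- rangeZ B, t <- tuplesZ r' B]
  end.

(* sum_{n_1+...+n_r = N} :alpha(n_1)...alpha(n_r): applied to a basis term;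
   the sum is infinite but only the terms with all |n_i| <= weight + |N| can
   act nontrivially, so this truncation is exact. *)
Definition apow_basis (a2 : int) (r : nat) (N : int) (t : algC * key) : vec :=
  let B := (sumn t.2.1 + absz N)%N in
  flatten [seq nop a2 ns [:: t] | ns <- tuplesZ r B & \sum_(x <- ns) x == N].

Definition apow (a2 : int) (r : nat) (N : int) (v : vec) : vec :=
  flatten [seq apow_basis a2 r N t | t <- v].

(* (alpha(-1)^r 1)_p, the p-th mode of Y(alpha(-1)^r 1, z) = :alpha(z)^r: *)
Definition Ymode (a2 : int) (r : nat) (p : int) (v : vec) : vec :=
  apow a2 r (p - r%:Z + 1) v.

(* omega = 1/(2 a2) alpha(-1)^2 1 (= 1/2 h(-1)^2 1 with h orthonormal),
   L(n) = omega_{n+1} *)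
Definition Vir (a2 : int) (n : int) (v : vec) : vec :=
  vscale (2 * a2%:~R)^-1 (Ymode a2 2 (n + 1) v).

Definition creat (a2 : int) (ns : seq nat) (v : vec) : vec :=
  foldr (fun n w => heis a2 (- n%:Z) w) v ns.

Definition eb (b : int) : vec := [:: (1, ([::], b))].
Definition Evec (m : nat) : vec := vadd (eb m%:Z) (eb (- m%:Z)).
Definition Fvec (m : nat) : vec := vadd (eb m%:Z) (vscale (-1) (eb (- m%:Z))).

Definition theta (v : vec) : vec :=
  [seq (t.1 * (-1) ^+ size t.2.1, (t.2.1, - t.2.2)) | t <- v].

(* v lies in V_L^+(m, w): v is theta-invariant, supported on
   M(1) (x) span(e^{m alpha}, e^{-m alpha}) (valid monomials), of weight w.
   (theta-invariant part of M(1)(x)(C e^{m alpha} + C e^{-m alpha}) is exactly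
   M(1)^+ (x) E^m + M(1)^- (x) F^m.) *)
Definition VLplus_weight (a2 : int) (m : nat) (w : algC) (v : vec) : Prop :=
  (forall x, coef (theta v) x = coef v x) /\
  (forall x, coef v x != 0 ->
     [/\ all (fun i => 0 < i)%N x.1,
         (x.2 == m%:Z) || (x.2 == - m%:Z)
       & (sumn x.1)%:R + (x.2 ^+ 2 * a2)%:~R / 2 = w]).

Definition lincomb (n : nat) (c : 'I_n -> algC) (fs : 'I_n -> vec) : vec :=
  flatten [seq vscale (c i) (fs i) | i <- enum 'I_n].

Definition vbasis_of (P : vec -> Prop) (n : nat) (fs : 'I_n -> vec) : Prop :=
  [/\ forall i, P (fs i),
      forall c : 'I_n -> algC,
        (forall x, coef (lincomb c fs) x = 0) -> forall i, c i = 0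
    & forall v, P v -> exists c : 'I_n -> algC,
        forall x, coef v x = coef (lincomb c fs) x].

Section Vecs.
Variables (a2 : int) (m : nat).
Definition f1 := creat a2 [:: 5%N] (Fvec m).
Definition f2 := creat a2 [:: 4%N; 1%N] (Evec m).
Definition f3 := creat a2 [:: 3%N; 2%N] (Evec m).
Definition f4 := creat a2 [:: 3%N; 1%N; 1%N] (Fvec m).
Definition f5 := creat a2 [:: 2%N; 2%N; 1%N] (Fvec m).
Definition f6 := creat a2 [:: 2%N; 1%N; 1%N; 1%N] (Evec m).
Definition f7 := creat a2 [:: 1%N; 1%N; 1%N; 1%N; 1%N] (Fvec m).
Definition h1 := creat a2 [:: 3%N] (Fvec m).
Definition h2 := creat a2 [:: 2%N; 1%N] (Evec m).
Definition h3 := creat a2 [:: 1%N; 1%N; 1%N] (Fvec m).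
Definition lemma4p2_vectors : seq vec :=
  [:: Vir a2 (-1) f1; Vir a2 (-1) f2; Vir a2 (-1) f3; Vir a2 (-1) f4;
      Vir a2 (-1) f5; Vir a2 (-1) f6; Vir a2 (-1) f7;
      Vir a2 (-3) h1; Vir a2 (-3) h2; Vir a2 (-3) h3;
      Ymode a2 4 (-3) (Evec m)].
End Vecs.

(* The proof is a coordinate computation.
   - The weight space W is described by the partitions lambda of 6 (there are
     eleven): a vector of W is theta-invariant and supported on the monomials
     alpha(-lambda) e^{+-m alpha}, so it is determined by its eleven
     e^{m alpha}-coordinates, and conversely every choice of these
     coordinates gives a vector of W ([expand_in_weight_space],
     [weight_space_expand]).
   - The eleven vectors are computed symbolically: their coefficients are
     polynomials in k and m with integer coefficients, so we run the
     operators of Defs on terms c k^i m^j and show that evaluation commutes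
     with them ([Ymode_ev], [creat_ev]).  Computing the symbolic vectors
     gives the 11 x 11 matrix [coord_matrix] of their coordinates
     ([sym_vectors_coords], [vector_coef]).
   - This matrix is invertible when k, m > 0: eliminating the coordinates one
     at a time reduces its left kernel to a 2 x 2 system with determinant
     7680 k m^2 (1 + k m^2) ([coord_system_trivial]).
   - Linear algebra then gives independence and spanning. *)
From Pilot Require Import Defs.
From mathcomp Require Import all_boot all_order all_algebra all_field.
From mathcomp Require Import ring zify.
Set Implicit Arguments. Unset Strict Implicit. Unset Printing Implicit Defensive.
Import GRing.Theory Num.Theory.
Local Open Scope ring_scope.

Lemma solve_pivot (R : idomainType) (u e x y : R) :
  e = 0 -> u != 0 -> e = u * (x - y) -> x = y.
Proof.
by move=> e0 u0 eE; move/eqP: e0; rewrite eE mulf_eq0 (negbTE u0) subr_eq0 => /eqP.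
Qed.
Arguments solve_pivot {R} u {e x y}.

Lemma cramer2 (R : idomainType) (a b c e x y : R) :
  a * x + b * y = 0 -> c * x + e * y = 0 -> a * e - b * c != 0 -> x = 0 /\ y = 0.
Proof.
move=> eq1 eq2 det0.
have detx : (a * e - b * c) * x = e * (a * x + b * y) - b * (c * x + e * y) by ring.
have dety : (a * e - b * c) * y = a * (c * x + e * y) - c * (a * x + b * y) by ring.
rewrite eq1 eq2 !mulr0 subr0 in detx dety.
by move/eqP: detx; move/eqP: dety; rewrite !mulf_eq0 (negbTE det0) => /eqP-> /eqP->.
Qed.

Ltac nonzero := repeat apply: mulf_neq0; rewrite ?oppr_eq0 ?pnatr_eq0 ?expf_neq0 //.

(* The left kernel of the coordinate matrix, written out column by column
   (column j is the coefficient of the j-th partition of 6), is trivial in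
   characteristic 0 as soon as K, M and 1 + K M^2 are nonzero. *)
Lemma coord_system_trivial (F : numFieldType) (K M d0 d1 d2 d3 d4 d5 d6 d7 d8 d9 d10 : F) :
  K != 0 -> M != 0 -> 1 + K * M ^+ 2 != 0 ->
  -20 * K * d0 - 12 * K * d7 - 32 * K ^+ 3 * M ^+ 3 * d10 = 0 ->
  -4 * K * M * d0 - 16 * K * d1 - 8 * K * d8 + 48 * K ^+ 2 * M ^+ 2 * d10 = 0 ->
  -4 * K * d1 - 12 * K * d2 - 4 * K * d8 + 48 * K ^+ 2 * M ^+ 2 * d10 = 0 ->
  -4 * K * M * d1 - 12 * K * d3 - 12 * K * d9 - 24 * K * M * d10 = 0 ->
  -8 * K * d2 - 4 * K * M * d7 + 24 * K ^+ 2 * M ^+ 2 * d10 = 0 ->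
  -4 * K * M * d2 - 8 * K * d3 - 16 * K * d4 + 2 * d7 - 4 * K * M * d8
    - 48 * K * M * d10 = 0 ->
  -4 * K * M * d3 - 8 * K * d5 - 4 * K * M * d9 + 4 * d10 = 0 ->
  -4 * K * d4 - 8 * K * M * d10 = 0 ->
  -4 * K * M * d4 - 12 * K * d5 + 2 * d8 + 6 * d10 = 0 ->
  -4 * K * M * d5 - 20 * K * d6 + 2 * d9 = 0 ->
  -4 * K * M * d6 = 0 ->
  [/\ d0 = 0, d1 = 0, d2 = 0, d3 = 0 & [/\ d4 = 0, d5 = 0, d6 = 0, d7 = 0
    & [/\ d8 = 0, d9 = 0 & d10 = 0]]].
Proof.
move=> K0 M0 KM0 c0 c1 c2 c3 c4 c5 c6 c7 c8 c9 c10.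
have d6E : d6 = 0 by apply: (solve_pivot (-4 * K * M) c10); [nonzero | ring].
subst d6.
have d4E : d4 = - 2 * M * d10 by apply: (solve_pivot (-4 * K) c7); [nonzero | ring].
have d9E : d9 = 2 * K * M * d5 by apply: (solve_pivot 2 c9); [nonzero | ring].
have d8E : d8 = 2 * K * M * d4 + 6 * K * d5 - 3 * d10.
  by apply: (solve_pivot 2 c8); [nonzero | ring].
have d0E : d0 = - (3 * d7 + 8 * K ^+ 2 * M ^+ 3 * d10) / 5.
  by apply: (solve_pivot (-20 * K) c0); [nonzero | field].
have d2E : d2 = (6 * K * M ^+ 2 * d10 - M * d7) / 2.
  by apply: (solve_pivot (-8 * K) c4); [nonzero | field].
have d1E : d1 = (12 * K * M ^+ 2 * d10 - M * d0 - 2 * d8) / 4.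
  by apply: (solve_pivot (-16 * K) c1); [nonzero | field].
have d3E : d3 = - M * d1 / 3 - d9 - 2 * M * d10.
  by apply: (solve_pivot (-12 * K) c3); [nonzero | field].
subst d3 d1 d0 d2 d8 d9 d4.
have d5E : d5 = (27 * M * d7 + (30 + 40 * K * M ^+ 2 - 8 * K ^+ 2 * M ^+ 4) * d10) / (60 * K).
  by apply: (solve_pivot (-12 * K ^+ 2) c2); [nonzero | field].
subst d5.
have [d7E d10E] : d7 = 0 /\ d10 = 0.
  apply: (@cramer2 _ (30 - 72 * K * M ^+ 2)
                     (K * M * (120 + 100 * K * M ^+ 2 + 48 * K ^+ 2 * M ^+ 4))
                     (- M * (54 + 24 * K * M ^+ 2))
                     (K * M ^+ 2 * (40 + 76 * K * M ^+ 2 + 16 * K ^+ 2 * M ^+ 4))).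
  - by rewrite -(mulr0 15) -c5; field.
  - by rewrite -(mulr0 15) -c6; field.
  - have -> : (30 - 72 * K * M ^+ 2) * (K * M ^+ 2 * (40 + 76 * K * M ^+ 2 + 16 * K ^+ 2 * M ^+ 4))
        - K * M * (120 + 100 * K * M ^+ 2 + 48 * K ^+ 2 * M ^+ 4) * (- M * (54 + 24 * K * M ^+ 2))
        = 7680 * K * M ^+ 2 * (1 + K * M ^+ 2) by ring.
    by nonzero.
subst d7 d10.
by repeat split; field.
Qed.

Definition partitions6 : seq (seq nat) :=
  [:: [:: 6]; [:: 5; 1]; [:: 4; 2]; [:: 4; 1; 1]; [:: 3; 3]; [:: 3; 2; 1];
      [:: 3; 1; 1; 1]; [:: 2; 2; 2]; [:: 2; 2; 1; 1]; [:: 2; 1; 1; 1; 1];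
      [:: 1; 1; 1; 1; 1; 1]]%N.
Definition lam (j : nat) : seq nat := nth [::] partitions6 j.

(* index of the partition of which s is a rearrangement (11 if there is none) *)
Definition part_index (s : seq nat) : nat := find (perm_eq s) partitions6.

(* theta acts on alpha(-lam j) e^{-m alpha} by the sign (-1)^{length (lam j)} *)
Definition sgn (j : nat) : algC := (-1) ^+ size (lam j).

Lemma part_indexP s : (part_index s < 11)%N -> perm_eq s (lam (part_index s)).
Proof. by move=> lt11; apply: (nth_find [::]); rewrite has_find. Qed.

Lemma lam_uniq (j j' : 'I_11) : perm_eq (lam j) (lam j') = (j == j').
Proof.
by case: j => -[|[|[|[|[|[|[|[|[|[|[|?]]]]]]]]]]] //;
   case: j' => -[|[|[|[|[|[|[|[|[|[|[|?]]]]]]]]]]].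
Qed.

Lemma lam_pos (j : 'I_11) : all (fun i => 0 < i)%N (lam j).
Proof. by case: j => -[|[|[|[|[|[|[|[|[|[|[|?]]]]]]]]]]]. Qed.

Lemma lam_sum (j : 'I_11) : sumn (lam j) = 6%N.
Proof. by case: j => -[|[|[|[|[|[|[|[|[|[|[|?]]]]]]]]]]]. Qed.

Lemma sgn_sq (j : nat) : sgn j * sgn j = 1.
Proof. by rewrite /sgn -exprMn mulrNN mul1r expr1n. Qed.

Fixpoint compositions (f n : nat) : seq (seq nat) :=
  match f with
  | 0%N => if n == 0%N then [:: [::]] else [::]
  | f'.+1 => if n == 0%N then [:: [::]] else
      flatten [seq [seq a :: c | c <- compositions f' (n - a)] | a <- iota 1 n]
  end.

Lemma mem_compositions s f :
  all (fun i => 0 < i)%N s -> (sumn s <= f)%N -> s \in compositions f (sumn s).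
Proof.
elim: s f => [|a s IH] f /=; first by case: f.
case/andP=> a_gt0 s_pos; case: f => [|f]; first by rewrite leqn0 addn_eq0 (negbTE (lt0n_neq0 a_gt0)).
move=> le_f /=; rewrite addn_eq0 (negbTE (lt0n_neq0 a_gt0)) /=.
apply/flatten_mapP; exists a; first by rewrite mem_iota a_gt0 add1n ltnS leq_addr.
rewrite addKn; apply: map_f; apply: IH => //.
by move: le_f; rewrite -(prednK a_gt0) addSn ltnS; apply: leq_trans; rewrite leq_addl.
Qed.

Lemma partitions6_cover s :
  all (fun i => 0 < i)%N s -> sumn s = 6%N -> exists j : 'I_11, perm_eq (lam j) s.
Proof.
move=> s_pos s_sum; have s_comp := mem_compositions s_pos (leqnn _).
rewrite s_sum in s_comp.
have all_comp : all (fun c => has (perm_eq^~ c) partitions6) (compositions 6 6).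
  by vm_compute.
have /hasP [l l_in l_s] := allP all_comp s s_comp.
have lt11 : (index l partitions6 < 11)%N by rewrite -[11%N]/(size partitions6) index_mem.
by exists (Ordinal lt11); rewrite /lam /= nth_index.
Qed.

Definition expand (m : nat) (r rf : 'I_11 -> algC) (x : key) : algC :=
  \sum_(j < 11) (r j * (perm_eq (lam j) x.1 && (m%:Z == x.2))%:R
               + rf j * (perm_eq (lam j) x.1 && (- m%:Z == x.2))%:R).

(* the theta-invariant vector with e^{m alpha}-coordinates r *)
Definition sym_expand (m : nat) (r : 'I_11 -> algC) : key -> algC :=
  expand m r (fun j => sgn j * r j).

Lemma eq_sym_expand m r r' x : r =1 r' -> sym_expand m r x = sym_expand m r' x.
Proof. by move=> rr'; apply: eq_bigr => j _; rewrite !rr'. Qed.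

Lemma coef_vscale c v x : coef (vscale c v) x = c * coef v x.
Proof. by rewrite /coef /vscale big_map mulr_sumr. Qed.

Lemma coef_perm v s s' z : perm_eq s s' -> coef v (s, z) = coef v (s', z).
Proof. by move=> ss'; apply: eq_bigl => t /=; rewrite (permPr ss'). Qed.

Lemma coef_theta v x : coef (theta v) x = (-1) ^+ size x.1 * coef v (x.1, - x.2).
Proof.
rewrite /coef /theta big_map mulr_sumr big_mkcond [RHS]big_mkcond.
apply: eq_bigr => t _ /=; case tx: (perm_eq t.2.1 x.1) => //=.
by rewrite (perm_size tx) eqr_oppLR; case: ifP; rewrite ?mulr0 // mulrC.
Qed.

Lemma expand_at m r rf (j : 'I_11) s z : perm_eq (lam j) s ->
  expand m r rf (s, z) = r j * (m%:Z == z)%:R + rf j * (- m%:Z == z)%:R.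
Proof.
move=> js; rewrite /expand (bigD1 j) //= js big1 ?addr0 // => j' j'j.
have -> : perm_eq (lam j') s = false.
  by apply/negbTE; apply: contra j'j => j's; rewrite -lam_uniq (permPr js).
by rewrite !mulr0 addr0.
Qed.

Lemma expand_out m r rf s z : ~~ [exists j : 'I_11, perm_eq (lam j) s] ->
  expand m r rf (s, z) = 0.
Proof.
move=> /existsPn s_out; rewrite /expand big1 // => j _ /=.
by rewrite (negbTE (s_out j)) !mulr0 addr0.
Qed.

Lemma sym_expand_theta m r x :
  (-1) ^+ size x.1 * sym_expand m r (x.1, - x.2) = sym_expand m r x.
Proof.
case: x => s z /=; rewrite /sym_expand.
have [/existsP [j js] | s_out] := boolP [exists j : 'I_11, perm_eq (lam j) s];
  last by rewrite !expand_out // mulr0.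
rewrite !(expand_at _ _ _ _ js) -(perm_size js) -/(sgn j).
rewrite eqr_oppLR opprK (eq_sym (- _)) (eq_sym (m%:Z)).
rewrite mulrDr !mulrA sgn_sq mul1r addrC; congr (_ + _).
by rewrite eqr_oppLR.
Qed.

Lemma oppz_neq (m : nat) : (0 < m)%N -> (- m%:Z == m%:Z) = false.
Proof. by move=> m_gt0; apply/negbTE/eqP; lia. Qed.

Lemma sym_expand_at (m : nat) r (j : 'I_11) :
  (0 < m)%N -> sym_expand m r (lam j, m%:Z) = r j.
Proof.
move=> m_gt0; rewrite /sym_expand (expand_at _ _ _ _ (perm_refl (lam j))).
by rewrite eqxx oppz_neq // mulr1 mulr0 addr0.
Qed.

Section WeightSpace.
Variables (k m : nat).
Hypothesis m_gt0 : (0 < m)%N.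
Local Notation W := (VLplus_weight (- (2 * k%:Z)) m ((- (k%:Z * m%:Z ^+ 2) + 6)%:~R)).

(* on the support of W the weight condition says exactly that the
   partition has size 6 *)
Lemma weight_eq (z : int) (n : nat) : (z == m%:Z) || (z == - m%:Z) ->
  ((n%:R : algC) + (z ^+ 2 * (- (2 * k%:Z)))%:~R / 2 == (- (k%:Z * m%:Z ^+ 2) + 6)%:~R)
  = (n == 6)%N.
Proof.
move=> z_pm; have -> : z ^+ 2 = m%:Z ^+ 2 by case/orP: z_pm => /eqP ->; rewrite ?sqrrN.
have -> : ((m%:Z ^+ 2 * (- (2 * k%:Z)))%:~R / 2 : algC) = - (k%:R * m%:R ^+ 2).
  by rewrite !expr2 !(intrM, intrN) /=; field.
by rewrite intrD intrN !expr2 !intrM addrC (inj_eq (addrI _)) eqr_nat.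
Qed.

Lemma expand_in_weight_space v r : (forall x, coef v x = sym_expand m r x) -> W v.
Proof.
move=> vE; split=> [x | x]; first by rewrite coef_theta !vE sym_expand_theta.
rewrite vE /sym_expand => x_supp.
have [j [js z_pm]] : exists j : 'I_11,
    perm_eq (lam j) x.1 /\ ((m%:Z == x.2) || (- m%:Z == x.2)).
  case: x x_supp => s z x_supp.
  have [/existsP [j js] | s_out] := boolP [exists j : 'I_11, perm_eq (lam j) s];
    last by rewrite expand_out ?eqxx in x_supp.
  exists j; split => //; move: x_supp; rewrite (expand_at _ _ _ _ js).
  by case: (m%:Z == z); case: (- m%:Z == z); rewrite ?mulr0 ?addr0 ?eqxx.
have z_pm' : (x.2 == m%:Z) || (x.2 == - m%:Z) by rewrite eq_sym (eq_sym x.2).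
split => //; first by rewrite -(perm_all _ js) lam_pos.
by apply/eqP; rewrite weight_eq // -(perm_sumn js) lam_sum.
Qed.

Lemma weight_space_expand v : W v ->
  forall x, coef v x = sym_expand m (fun j => coef v (lam j, m%:Z)) x.
Proof.
case=> v_theta v_supp [s z]; rewrite /sym_expand.
have [/existsP [j js] | s_out] := boolP [exists j : 'I_11, perm_eq (lam j) s]; last first.
  rewrite expand_out //; apply/eqP; apply: contraT => x_supp.
  have [s_pos z_pm /eqP] := v_supp _ x_supp; rewrite weight_eq // => /eqP s_sum.
  have [j js] := partitions6_cover s_pos s_sum.
  by move/existsPn: s_out => /(_ j); rewrite js.
rewrite (expand_at _ _ _ _ js).
have [-> | zNm] := eqVneq z m%:Z.
  by rewrite oppz_neq // mulr0 addr0 mulr1; apply: coef_perm; rewrite perm_sym.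
have [-> | zNNm] := eqVneq z (- m%:Z).
  rewrite mulr0 add0r mulr1 -v_theta coef_theta /= opprK /sgn (perm_size js).
  by congr (_ * _); apply: coef_perm; rewrite perm_sym.
rewrite !mulr0 addr0; apply/eqP; apply: contraT => x_supp.
by have [_ /=] := v_supp _ x_supp; rewrite (negbTE zNm) (negbTE zNNm).
Qed.

End WeightSpace.

(* A symbolic coefficient (c, i, j) stands for c k^i m^j with c an integer;
   a symbolic term pairs it with a monomial alpha(-s) and the sign of the
   lattice vector +-m alpha. *)
Definition mono := (int * nat * nat)%type.
Definition sterm := (mono * (seq nat * bool))%type.

(* The operators of Defs acting on symbolic terms (suffix S), with
   <alpha,alpha> = -2k: alpha(0) e^{+-m alpha} = -+2km e^{+-m alpha} and
   alpha(n), n > 0, differentiates with factor -2kn. *)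
Definition heis_basisS (n : int) (t : sterm) : seq sterm :=
  let: (c, i, j, (s, sg)) := t in
  if n < 0 then [:: (c, i, j, (absz n :: s, sg))]
  else if n == 0 then [:: (c * (if sg then -2 else 2), i.+1, j.+1, (s, sg))]
  else [seq (c * (-2 * n), i.+1, j, (rem_at l s, sg))
         | l <- iota 0 (size s) & nth 0%N s l == absz n].
Definition heisS (n : int) (v : seq sterm) : seq sterm :=
  flatten [seq heis_basisS n t | t <- v].
Definition nopS (ns : seq int) (v : seq sterm) : seq sterm :=
  foldr heisS v ([seq n <- ns | n < 0] ++ [seq n <- ns | 0 <= n]).
(* a computable sum of integers *)
Definition sumz (s : seq int) : int := foldr +%R 0 s.

Lemma sumzE s : \sum_(x <- s) x = sumz s.
Proof. by elim: s => [|a s IH]; rewrite ?big_nil ?big_cons ?IH. Qed.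

Definition apow_basisS (r : nat) (N : int) (t : sterm) : seq sterm :=
  let B := (sumn t.2.1 + absz N)%N in
  flatten [seq nopS ns [:: t] | ns <- tuplesZ r B & sumz ns == N].
Definition apowS (r : nat) (N : int) (v : seq sterm) : seq sterm :=
  flatten [seq apow_basisS r N t | t <- v].
Definition YmodeS (r : nat) (p : int) (v : seq sterm) : seq sterm :=
  apowS r (p - r%:Z + 1) v.
Definition creatS (ns : seq nat) (v : seq sterm) : seq sterm :=
  foldr (fun n w => heisS (- n%:Z) w) v ns.
Definition E_sym : seq sterm :=
  [:: (1, 0%N, 0%N, ([::], true)); (1, 0%N, 0%N, ([::], false))].
Definition F_sym : seq sterm :=
  [:: (1, 0%N, 0%N, ([::], true)); (-1, 0%N, 0%N, ([::], false))].

(* the eleven vectors of the lemma, without the factor 1/(2<alpha,alpha>) of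
   L(n) = omega_{n+1} *)
Definition sym_vectors : seq (seq sterm) :=
  [:: YmodeS 2 (-1 + 1) (creatS [:: 5]%N F_sym);
      YmodeS 2 (-1 + 1) (creatS [:: 4; 1]%N E_sym);
      YmodeS 2 (-1 + 1) (creatS [:: 3; 2]%N E_sym);
      YmodeS 2 (-1 + 1) (creatS [:: 3; 1; 1]%N F_sym);
      YmodeS 2 (-1 + 1) (creatS [:: 2; 2; 1]%N F_sym);
      YmodeS 2 (-1 + 1) (creatS [:: 2; 1; 1; 1]%N E_sym);
      YmodeS 2 (-1 + 1) (creatS [:: 1; 1; 1; 1; 1]%N F_sym);
      YmodeS 2 (-3 + 1) (creatS [:: 3]%N F_sym);
      YmodeS 2 (-3 + 1) (creatS [:: 2; 1]%N E_sym);
      YmodeS 2 (-3 + 1) (creatS [:: 1; 1; 1]%N F_sym);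
      YmodeS 4 (-3) E_sym].

Definition evm (K M : algC) (c : mono) : algC :=
  let: (z, i, j) := c in z%:~R * K ^+ i * M ^+ j.

Section Evaluation.
Variables k m : nat.
Local Notation a2 := (- (2 * k%:Z)).

Definition evt (t : sterm) : algC * key :=
  (evm k%:R m%:R t.1, (t.2.1, if t.2.2 then m%:Z else - m%:Z)).

Lemma heis_basis_ev n t : heis_basis a2 n (evt t) = map evt (heis_basisS n t).
Proof.
case: t => [[[c i] j] [s sg]]; rewrite /heis_basis /heis_basisS /evt /=.
case: ifP => // _; case: ifP => _.
  by congr [:: (_, _)]; rewrite /evm /=; case: sg; rewrite !exprS !(intrM, intrN); ring.
rewrite -map_comp; apply: eq_map => l /=; congr pair.
by rewrite /evm /= !exprS !(intrM, intrN); ring.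
Qed.

Lemma heis_ev n v : heis a2 n (map evt v) = map evt (heisS n v).
Proof.
rewrite /heis /heisS map_flatten -!map_comp; congr flatten.
by apply: eq_map => t; exact: heis_basis_ev.
Qed.

Lemma nop_ev ns v : nop a2 ns (map evt v) = map evt (nopS ns v).
Proof. by rewrite /nop /nopS; elim: (_ ++ _) => [|n l IH] //=; rewrite IH heis_ev. Qed.

Lemma Ymode_ev r p v : Ymode a2 r p (map evt v) = map evt (YmodeS r p v).
Proof.
rewrite /Ymode /YmodeS /apow /apowS map_flatten -!map_comp; congr flatten.
apply: eq_map => t /=; rewrite /apow_basis /apow_basisS map_flatten -map_comp /=.
under eq_filter => ns do rewrite sumzE.
by congr flatten; apply: eq_map => ns /=; rewrite -nop_ev.
Qed.

Lemma creat_ev ns v : creat a2 ns (map evt v) = map evt (creatS ns v).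
Proof. by elim: ns => [|n ns IH] //=; rewrite IH heis_ev. Qed.

Lemma Evec_ev : Evec m = map evt E_sym.
Proof. by rewrite /Evec /eb /evt /evm /= !expr0 !mulr1. Qed.

Lemma Fvec_ev : Fvec m = map evt F_sym.
Proof. by rewrite /Fvec /vscale /eb /evt /evm /= !expr0 !mulr1. Qed.

(* the normalisation of L(n); the last vector is not rescaled *)
Definition vector_scale (i : nat) : algC := if i == 10%N then 1 else (2 * a2%:~R)^-1.

Lemma vectors_ev (i : 'I_11) x :
  coef (nth [::] (lemma4p2_vectors a2 m) i) x
  = vector_scale i * coef (map evt (nth [::] sym_vectors i)) x.
Proof.
rewrite /lemma4p2_vectors /Vir /f1 /f2 /f3 /f4 /f5 /f6 /f7 /h1 /h2 /h3.
rewrite Evec_ev Fvec_ev !creat_ev !Ymode_ev.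
case: i => -[|[|[|[|[|[|[|[|[|[|[|?]]]]]]]]]]] // lt11; try exact: coef_vscale.
exact: esym (mul1r _).
Qed.

End Evaluation.

Definition rowpoly (sv : seq sterm) (sg : bool) (j : nat) : seq mono :=
  [seq t.1 | t <- sv & (part_index t.2.1 == j) && (t.2.2 == sg)].
Definition row_coord (K M : algC) (sv : seq sterm) (sg : bool) (j : nat) : algC :=
  \sum_(c <- rowpoly sv sg j) evm K M c.

Lemma sum_if (f : mono -> algC) (b : bool) a l :
  \sum_(c <- if b then a :: l else l) f c = b%:R * f a + \sum_(c <- l) f c.
Proof. by case: b; rewrite ?big_cons ?mul1r ?mul0r ?add0r. Qed.

Lemma rowpoly_cons t sv sg j : rowpoly (t :: sv) sg j =
  if (part_index t.2.1 == j) && (t.2.2 == sg) then t.1 :: rowpoly sv sg j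
  else rowpoly sv sg j.
Proof. by rewrite /rowpoly /=; case: ifP. Qed.

Lemma coef_rows (k m : nat) sv x : all (fun t => part_index t.2.1 < 11)%N sv ->
  coef (map (evt k m) sv) x
  = expand m (fun j => row_coord k%:R m%:R sv true j)
             (fun j => row_coord k%:R m%:R sv false j) x.
Proof.
rewrite /coef big_map big_mkcond /expand /row_coord.
elim: sv => [|t sv IH] /=.
  by rewrite big_nil big1 // => j _; rewrite /rowpoly /= big_nil !mul0r addr0.
case/andP => t_part sv_part; rewrite big_cons IH //.
under [RHS]eq_bigr => j _ do rewrite !rowpoly_cons !sum_if !mulrDl addrACA.
rewrite [RHS]big_split /= addrC [RHS]addrC; congr (_ + _).
rewrite (bigD1 (Ordinal t_part)) //= big1 ?addr0 => [|j jNt]; last first.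
  rewrite (_ : (part_index t.2.1 == j) = false) ?mul0r ?add0r //.
  by apply/negbTE; apply: contra jNt => /eqP jt; apply/eqP/val_inj.
rewrite eqxx -(permPl (part_indexP t_part)).
by case: (t.2.2); case: (perm_eq t.2.1 x.1);
  rewrite /= ?mul1r ?mul0r ?add0r ?addr0 ?mulr0 ?mulr1 //; case: ifP; rewrite ?mulr1 ?mulr0.
Qed.

(* Row i, column j: the e^{m alpha}-coordinate at the j-th partition of the
   i-th symbolic vector, a polynomial in K = k and M = m. *)
Definition coord_matrix (K M : algC) (i j : nat) : algC :=
  match i, j with
  | 0, 0 => -20 * K | 0, 1 => -4 * K * M
  | 1, 1 => -16 * K | 1, 2 => -4 * K | 1, 3 => -4 * K * M
  | 2, 2 => -12 * K | 2, 4 => -8 * K | 2, 5 => -4 * K * M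
  | 3, 3 => -12 * K | 3, 5 => -8 * K | 3, 6 => -4 * K * M
  | 4, 5 => -16 * K | 4, 7 => -4 * K | 4, 8 => -4 * K * M
  | 5, 6 => -8 * K | 5, 8 => -12 * K | 5, 9 => -4 * K * M
  | 6, 9 => -20 * K | 6, 10 => -4 * K * M
  | 7, 0 => -12 * K | 7, 4 => -4 * K * M | 7, 5 => 2
  | 8, 1 => -8 * K | 8, 2 => -4 * K | 8, 5 => -4 * K * M | 8, 8 => 2
  | 9, 3 => -12 * K | 9, 6 => -4 * K * M | 9, 9 => 2
  | 10, 0 => -32 * K ^+ 3 * M ^+ 3 | 10, 1 => 48 * K ^+ 2 * M ^+ 2
  | 10, 2 => 48 * K ^+ 2 * M ^+ 2 | 10, 3 => -24 * K * M
  | 10, 4 => 24 * K ^+ 2 * M ^+ 2 | 10, 5 => -48 * K * M | 10, 6 => 4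
  | 10, 7 => -8 * K * M | 10, 8 => 6
  | _, _ => 0
  end.

Lemma sym_vectors_supported (i : 'I_11) :
  all (fun t => part_index t.2.1 < 11)%N (nth [::] sym_vectors i).
Proof.
have all_supp : all (all (fun t => part_index t.2.1 < 11)%N) sym_vectors by vm_compute.
exact: (all_nthP [::] all_supp i (ltn_ord i)).
Qed.

Ltac eval_row :=
  match goal with |- context [rowpoly ?sv ?sg ?j] =>
    let l := eval vm_compute in (rowpoly sv sg j) in
    rewrite (_ : rowpoly sv sg j = l); last by vm_compute
  end;
  rewrite /coord_matrix /sgn /lam /= ?big_cons ?big_nil /=; ring.

Lemma sym_vectors_coords (K M : algC) (i j : 'I_11) :
  row_coord K M (nth [::] sym_vectors i) true j = coord_matrix K M i j /\
  row_coord K M (nth [::] sym_vectors i) false j = sgn j * coord_matrix K M i j.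
Proof.
rewrite /row_coord.
case: i => -[|[|[|[|[|[|[|[|[|[|[|?]]]]]]]]]]] // lti;
case: j => -[|[|[|[|[|[|[|[|[|[|[|?]]]]]]]]]]] // ltj; split; eval_row.
Qed.

Lemma coord_matrix_left_kernel (K M : algC) (d : nat -> algC) :
  K != 0 -> M != 0 -> 1 + K * M ^+ 2 != 0 ->
  (forall j, (j < 11)%N -> \sum_(i < 11) d i * coord_matrix K M i j = 0) ->
  forall i, (i < 11)%N -> d i = 0.
Proof.
move=> K0 M0 KM0 col.
suff [d0 d1 d2 d3 [d4 d5 d6 d7 [d8 d9 d10]]] :
    [/\ d 0%N = 0, d 1%N = 0, d 2%N = 0, d 3%N = 0
      & [/\ d 4%N = 0, d 5%N = 0, d 6%N = 0, d 7%N = 0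
      & [/\ d 8%N = 0, d 9%N = 0 & d 10%N = 0]]].
  by case=> [|[|[|[|[|[|[|[|[|[|[|?]]]]]]]]]]].
apply: (coord_system_trivial K0 M0 KM0);
  [ rewrite -(col 0%N isT) | rewrite -(col 1%N isT) | rewrite -(col 2%N isT)
  | rewrite -(col 3%N isT) | rewrite -(col 4%N isT) | rewrite -(col 5%N isT)
  | rewrite -(col 6%N isT) | rewrite -(col 7%N isT) | rewrite -(col 8%N isT)
  | rewrite -(col 9%N isT) | rewrite -(col 10%N isT) ];
  by rewrite !big_ord_recl big_ord0 /=; ring.
Qed.

Lemma coef_lincomb n (c : 'I_n -> algC) (fs : 'I_n -> vec) x :
  coef (lincomb c fs) x = \sum_(i < n) c i * coef (fs i) x.
Proof.
rewrite /lincomb {1}/coef big_flatten /= big_map big_enum /=.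
by apply: eq_bigr => i _; rewrite -coef_vscale.
Qed.

Lemma sym_expand_lincomb n m (c : 'I_n -> algC) (r : 'I_n -> 'I_11 -> algC) x :
  \sum_(i < n) c i * sym_expand m (r i) x = sym_expand m (fun j => \sum_(i < n) c i * r i j) x.
Proof.
rewrite /sym_expand /expand; under eq_bigr => i _ do rewrite mulr_sumr.
rewrite exchange_big; apply: eq_bigr => j _ /=.
rewrite mulr_sumr !mulr_suml -big_split; apply: eq_bigr => i _.
by rewrite mulrDr !mulrA (mulrC (c i) (sgn j)).
Qed.

Section Basis.
Variables k m : nat.
Hypotheses (k_gt0 : (0 < k)%N) (m_gt0 : (0 < m)%N).
Local Notation a2 := (- (2 * k%:Z)).
Local Notation W := (VLplus_weight a2 m ((- (k%:Z * m%:Z ^+ 2) + 6)%:~R)).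
Local Notation fs := (fun i : 'I_11 => nth [::] (lemma4p2_vectors a2 m) i).

Definition coords_mx : 'M[algC]_11 :=
  \matrix_(i, j) (vector_scale k i * coord_matrix k%:R m%:R i j).

Lemma vector_coef (i : 'I_11) x : coef (fs i) x = sym_expand m (fun j => coords_mx i j) x.
Proof.
rewrite vectors_ev coef_rows ?sym_vectors_supported // /sym_expand /expand mulr_sumr.
apply: eq_bigr => j _; have [-> ->] := sym_vectors_coords k%:R m%:R i j.
by rewrite !mxE; ring.
Qed.

Lemma lincomb_coef (c : 'I_11 -> algC) x :
  coef (lincomb c fs) x = sym_expand m (fun j => ((\row_i c i) *m coords_mx) 0 j) x.
Proof.
rewrite coef_lincomb; under eq_bigr => i _ do rewrite vector_coef.
rewrite sym_expand_lincomb; apply: eq_sym_expand => j.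
by rewrite mxE; apply: eq_bigr => i _; rewrite [in RHS]mxE.
Qed.

Lemma coords_mx_unit : coords_mx \in unitmx.
Proof.
rewrite -row_free_unit; apply/inj_row_free => v vM0.
have K0 : (k%:R : algC) != 0 by rewrite pnatr_eq0 -lt0n.
have M0 : (m%:R : algC) != 0 by rewrite pnatr_eq0 -lt0n.
have KM0 : 1 + k%:R * m%:R ^+ 2 != 0 :> algC.
  by rewrite -natrX -natrM nat1r pnatr_eq0.
have scale0 i : vector_scale k i != 0.
  rewrite /vector_scale; case: ifP => _; first exact: oner_neq0.
  by rewrite invr_eq0 mulf_neq0 ?pnatr_eq0 // intr_eq0; apply/eqP; lia.
suff d_zero : forall i, (i < 11)%N -> v 0 (inord i) * vector_scale k i = 0.
  apply/rowP => i; rewrite mxE; apply/eqP.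
  by have /eqP := d_zero i (ltn_ord i); rewrite inord_val mulf_eq0 (negbTE (scale0 i)) orbF.
apply: (coord_matrix_left_kernel (d := fun i => v 0 (inord i) * vector_scale k i) K0 M0 KM0).
move=> j lt_j11; have /rowP /(_ (inord j)) := vM0; rewrite !mxE => vMj.
by rewrite -[RHS]vMj; apply: eq_bigr => i _; rewrite mxE inord_val (inordK lt_j11) mulrA.
Qed.

Lemma vectors_in_weight_space (i : 'I_11) : W (fs i).
Proof. exact: (expand_in_weight_space k (vector_coef i)). Qed.

Lemma vectors_free (c : 'I_11 -> algC) :
  (forall x, coef (lincomb c fs) x = 0) -> forall i, c i = 0.
Proof.
move=> c0 i.
have cM0 : (\row_i c i) *m coords_mx = 0.
  by apply/rowP => j; rewrite [RHS]mxE -(c0 (lam j, m%:Z)) lincomb_coef sym_expand_at.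
have := congr1 (mulmx^~ (invmx coords_mx)) cM0.
by rewrite mulmxK ?coords_mx_unit // mul0mx => /rowP /(_ i); rewrite !mxE.
Qed.

Lemma vectors_span v : W v ->
  exists c : 'I_11 -> algC, forall x, coef v x = coef (lincomb c fs) x.
Proof.
move=> Wv; pose y : 'rV[algC]_11 := \row_j coef v (lam j, m%:Z).
exists (fun i => (y *m invmx coords_mx) 0 i) => x.
rewrite lincomb_coef (weight_space_expand m_gt0 Wv); apply: eq_sym_expand => j.
rewrite (_ : \row_i _ = y *m invmx coords_mx); last by apply/rowP => i; rewrite mxE.
by rewrite mulmxKV ?coords_mx_unit // mxE.
Qed.

End Basis.

Theorem lemma4p2 (k m : nat) (hk : (0 < k)%N) (hm : (0 < m)%N) :
  vbasis_of (VLplus_weight (- (2 * k%:Z)) m ((- (k%:Z * m%:Z ^+ 2) + 6)%:~R))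
    (fun i : 'I_11 => nth [::] (lemma4p2_vectors (- (2 * k%:Z)) m) i).
Proof.
split.
- exact: vectors_in_weight_space.
- exact: vectors_free hk hm.
- exact: vectors_span hk hm.
Qed.
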